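(* Let $0<\beta<1$ and suppose $Y$ has a continuous distribution with support $\mathcal{Y}$, and that: (i) $\operatorname{int}(\mathcal{Y})\cap\operatorname{int}(\mathcal{R}_{\mathcal{X}})$ is connected; (ii) $y\mapsto f(x,y)$ is continuous for every $x\in\mathcal{X}$; (iii) for each $x\in\mathcal{X}$ there exists $x'\in\mathcal{X}$ such that $\operatorname{int}(\mathcal{Y})\cap\operatorname{int}(\mathcal{R}_x\cap\mathcal{R}_{x'})\neq\emptyset$ and $\operatorname{int}(\mathcal{Y})\cap\operatorname{int}(\mathcal{R}_{x'}\setminus\mathcal{R}_x)\neq\emptyset$. Then $\mathcal{R}_{\mathcal{X}}$ satisfies the $\beta$-aggregation condition.
   Context: Let $(\Omega,\mathcal{F},\mathbb{P})$ be a probability space, $Y$ a random vector in $\mathbb{R}^d$ with support $\mathcal{Y}$, $\mathcal{X}\subseteq\mathbb{R}^k$ a set of decisions and $f:\mathcal{X}\times\mathbb{R}^d\to\mathbb{R}$ a loss function with $f(x,Y)$ measurable for all $x$. Write $F_x(z)=\mathbb{P}(f(x,Y)\le z)$ and $F_x^{-1}(\beta)=\inf\{z: F_x(z)\ge\beta\}$. The ($\beta$-)risk region of $x$ is $\mathcal{R}_x=\{y\in\mathbb{R}^d: f(x,y)\ge F_x^{-1}(\beta)\}$ and $\mathcal{R}_{\mathcal{X}}=\bigcup_{x\in\mathcal{X}}\mathcal{R}_x$. A set $\mathcal{R}$ with $\mathcal{R}_{\mathcal{X}}\subseteq\mathcal{R}\subset\mathbb{R}^d$ satisfies the $\beta$-aggregation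 condition if for all $x\in\mathcal{X}$ and all $z'<F_x^{-1}(\beta)$, $\mathbb{P}\big(Y\in\{y: z'<f(x,y)\le F_x^{-1}(\beta)\}\cap\mathcal{R}\big)>0$. $\operatorname{int}$ denotes topological interior. *)

From HB Require Import structures.
From mathcomp Require Import all_boot all_order all_algebra.
From mathcomp Require Import all_classical all_reals all_analysis.
Set Implicit Arguments. Unset Strict Implicit. Unset Printing Implicit Defensive.
Import Order.TTheory GRing.Theory Num.Theory.
Import numFieldNormedType.Exports.
Local Open Scope classical_set_scope.
Local Open Scope ring_scope.

Section Defs.
Context {dT : measure_display} {T : measurableType dT} {R : realType}
  (P : probability T R) {d k : nat} (Y : T -> 'rV[R]_d).

Definition is_random_vector : Prop :=
  forall U : set 'rV[R]_d, open U -> measurable (Y @^-1` U).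

(* law_support of the law of Y: points all of whose open neighbourhoods have
   positive probability (the smallest closed set of probability one) *)
Definition law_support : set 'rV[R]_d :=
  [set y | forall U : set 'rV[R]_d, open U -> U y -> (0 < P (Y @^-1` U))%E].

Definition continuous_distribution : Prop :=
  forall y : 'rV[R]_d, P (Y @^-1` [set y]) = 0%E.

(* "P(Y \in S) > 0" for a possibly non-measurable S: some event contained in
   {Y \in S} has positive probability (inner probability > 0). *)
Definition pos_prob (S : set 'rV[R]_d) : Prop :=
  exists A : set T, [/\ measurable A, A `<=` Y @^-1` S & (0 < P A)%E].

Variable f : 'rV[R]_k -> 'rV[R]_d -> R.

Definition cdf (x : 'rV[R]_k) (z : R) : \bar R :=
  P [set w | f x (Y w) <= z].

Definition quantile (x : 'rV[R]_k) (beta : R) : R :=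
  inf [set z | (beta%:E <= cdf x z)%E].

Definition risk_region (beta : R) (x : 'rV[R]_k) : set 'rV[R]_d :=
  [set y | quantile x beta <= f x y].

Definition risk_region_X (beta : R) (X : set 'rV[R]_k) : set 'rV[R]_d :=
  \bigcup_(x in X) risk_region beta x.

Definition beta_aggregation (beta : R) (X : set 'rV[R]_k)
    (Rs : set 'rV[R]_d) : Prop :=
  risk_region_X beta X `<=` Rs /\
  forall x, X x -> forall z' : R, z' < quantile x beta ->
    pos_prob ([set y | z' < f x y <= quantile x beta] `&` Rs).

End Defs.

From HB Require Import structures.
From mathcomp Require Import all_boot all_order all_algebra.
From mathcomp Require Import all_classical all_reals all_analysis.
Import Order.TTheory GRing.Theory Num.Theory.
Import numFieldNormedType.Exports.
Local Open Scope classical_set_scope.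
Local Open Scope ring_scope.

(** Let S be the connected set int(supp Y) ∩ int(R_X) and q the beta-quantile
   of f(x, Y). By (iii), S contains a point of R_x, where f(x, .) >= q, and a
   point outside R_x, where f(x, .) < q; so the interval f(x, S) contains every
   level just below q. Hence for z' < q the open set of points of S with
   z' < f(x, .) < q is nonempty, and being inside the support it has positive
   probability. *)

Section RiskRegions.
Context {dT : measure_display} {T : measurableType dT} {R : realType}
  (P : probability T R) {d k : nat} (Y : T -> 'rV[R]_d).

Lemma pos_probS {A B : set 'rV[R]_d} :
  A `<=` B -> pos_prob P Y A -> pos_prob P Y B.
Proof.
move=> AB [E [mE EA PE]]; exists E; split=> // w /EA; exact: AB.
Qed.

Lemma pos_prob_open_support {U : set 'rV[R]_d} :
  is_random_vector Y -> open U -> U `&` law_support P Y !=set0 ->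
  pos_prob P Y U.
Proof. by move=> rvY oU [y [Uy suppy]]; exists (Y @^-1` U); split; auto. Qed.

Lemma risk_region_subX {f : 'rV[R]_k -> 'rV[R]_d -> R} {beta X x} :
  X x -> risk_region P Y f beta x `<=` risk_region_X P Y f beta X.
Proof. by move=> Xx y Ry; exists x. Qed.

End RiskRegions.

Section ConnectedLevels.
Context {T : topologicalType} {R : realType}.

Lemma connected_continuous_ivt {S : set T} {g : T -> R} {a b : T} (t : R) :
  connected S -> continuous g -> S a -> S b -> g a <= t <= g b ->
  exists2 y, S y & g y = t.
Proof.
move=> cS cg Sa Sb gat.
have cgS : connected (g @` S).
  by apply: connected_continuous_connected => //; exact: continuous_subspaceT.
by have [y] := (connected_intervalP _).1 cgS (g a) (g b) (imageP _ Sa)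
  (imageP _ Sb) t gat; exists y.
Qed.

Lemma open_level_band {g : T -> R} (c q : R) :
  continuous g -> open [set y | c < g y < q].
Proof.
move=> cg; have -> : [set y | c < g y < q] =
    g @^-1` [set t | c < t] `&` g @^-1` [set t | t < q].
  by apply/seteqP; split=> y /=; [move/andP | move=> [-> ->]].
by apply: openI; apply: open_comp (in1W cg) _; [exact: open_gt | exact: open_lt].
Qed.

Lemma connected_level_band_neq0 {S : set T} {g : T -> R} {a b : T} (c : R) {q : R} :
  connected S -> continuous g -> S a -> S b -> g a < q -> q <= g b -> c < q ->
  S `&` [set y | c < g y < q] !=set0.
Proof.
move=> cS cg Sa Sb gaq qgb cq.
have lo_q : Num.max c (g a) < q by rewrite gt_max cq gaq.
pose m := (Num.max c (g a) + q) / 2.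
have [lo_m m_q] := midf_lt lo_q; rewrite -/m in lo_m m_q.
have [c_lo ga_lo] : c <= Num.max c (g a) /\ g a <= Num.max c (g a).
  by rewrite !le_max !lexx orbT.
have [|y Sy gym] := connected_continuous_ivt m cS cg Sa Sb.
  by rewrite (ltW (le_lt_trans ga_lo lo_m)) (ltW (lt_le_trans m_q qgb)).
by exists y; split=> //=; rewrite gym m_q (le_lt_trans c_lo lo_m).
Qed.

End ConnectedLevels.

Theorem mainTheorem3 (dT : measure_display) (T : measurableType dT)
  (R : realType) (P : probability T R) (d k : nat) (Y : T -> 'rV[R]_d)
  (X : set 'rV[R]_k) (f : 'rV[R]_k -> 'rV[R]_d -> R) (beta : R) :
  0 < beta < 1 ->
  is_random_vector Y ->
  (forall x, measurable_fun setT (fun w => f x (Y w))) ->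
  continuous_distribution P Y ->
  connected (interior (law_support P Y) `&` interior (risk_region_X P Y f beta X)) ->
  (forall x, X x -> continuous (f x)) ->
  (forall x, X x -> exists2 x', X x' &
     (interior (law_support P Y) `&`
        interior (risk_region P Y f beta x `&` risk_region P Y f beta x')
        !=set0) /\
     (interior (law_support P Y) `&`
        interior (risk_region P Y f beta x' `\` risk_region P Y f beta x)
        !=set0)) ->
  beta_aggregation P Y f beta X (risk_region_X P Y f beta X).
Proof.
move=> _ rvY _ _ cS fc witnesses; split=> // x Xx z' z'q.
set q := quantile P Y f x beta.
set S := _ `&` _ in cS.
have [x' Xx' [[y1 [suppy1 Iy1]] [y2 [suppy2 Iy2]]]] := witnesses x Xx.
have Sy1 : S y1.
  by split=> //; apply: interiorS Iy1 => y [/(risk_region_subX P Y Xx)].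
have Sy2 : S y2.
  by split=> //; apply: interiorS Iy2 => y [/(risk_region_subX P Y Xx')].
have fy2_q : f x y2 < q by have [_ /negP] := interior_subset Iy2; rewrite -ltNge.
have q_fy1 : q <= f x y1 by have [] := interior_subset Iy1.
apply: (pos_probS P Y (A := S `&` [set y | z' < f x y < q])).
  move=> y [[_ /interior_subset RXy] /andP[z'f fq]]; split=> //.
  by rewrite /= z'f ltW.
apply: pos_prob_open_support => //.
  by apply: openI (open_level_band _ _ (fc x Xx)); apply: openI; exact: open_interior.
have [y [[suppy RXy] band]] :=
  connected_level_band_neq0 z' cS (fc x Xx) Sy2 Sy1 fy2_q q_fy1 z'q.
exists y; split; last exact: interior_subset suppy.
by split; first split.
Qed.
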